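(* Let $X$ be an infinite-dimensional first-countable topological vector space over $\mathbb{K}$ ($\mathbb{K}=\mathbb{R}$ or $\mathbb{C}$). Then $w(X)\le\dim(X)$.
   Context: The weight $w(X)$ is the smallest cardinality of a base for the topology of $X$; $\dim(X)$ is the (Hamel) dimension of $X$. *)

From HB Require Import structures.
From mathcomp Require Import all_boot all_order all_algebra.
From mathcomp Require Import all_classical all_reals all_analysis.
From mathcomp Require Import complex.
Set Implicit Arguments. Unset Strict Implicit. Unset Printing Implicit Defensive.
Import Order.TTheory GRing.Theory Num.Theory.
Local Open Scope classical_set_scope.
Local Open Scope ring_scope.

Definition first_countable (T : topologicalType) : Prop :=
  forall x : T, exists B : set (set T),
    [/\ countable B, (forall U, B U -> nbhs x U) &
        (forall V, nbhs x V -> exists2 U, B U & U `<=` V)].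

Section Hamel.
Variables (K : numDomainType) (V : lmodType K).

Definition lin_indep (H : set V) : Prop :=
  forall (s : seq V) (c : V -> K), uniq s -> (forall v, v \in s -> H v) ->
    \sum_(v <- s) c v *: v = 0 -> forall v, v \in s -> c v = 0.

Definition spans (H : set V) : Prop :=
  forall x : V, exists (s : seq V) (c : V -> K),
    (forall v, v \in s -> H v) /\ x = \sum_(v <- s) c v *: v.

Definition hamel_basis (H : set V) : Prop := lin_indep H /\ spans H.

Definition infinite_dimensional : Prop :=
  ~ (exists S : set V, finite_set S /\ spans S).
End Hamel.

From HB Require Import structures.
From mathcomp Require Import all_boot all_order all_algebra.
From mathcomp Require Import all_classical all_reals all_analysis.
From mathcomp Require Import complex.
From mathcomp Require Import lra.
Set Implicit Arguments. Unset Strict Implicit. Unset Printing Implicit Defensive.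
Import Order.TTheory GRing.Theory Num.Theory.
Local Open Scope classical_set_scope.

(* Let S be a countable dense set of scalars (rationals, resp. Gaussian
   rationals) and H a Hamel basis, necessarily infinite.  Finite S-linear
   combinations of H are dense in X, since each coefficient of the expansion
   of a point can be approximated separately.  Translating a countable local
   base at 0 by these combinations gives a base of X: if U - U lies in W - x,
   choose a combination s with x - s in U, then x is in s + U, inside W.  This
   base has at most |seq (S * H)| * aleph_0 = |H| elements, because
   |H * H| = |H| for infinite H, by the classical Zorn argument on injections
   D * D -> D with D a subset of H. *)

(* [(A #<= B)%card] with a plain function as witness, which composes freely. *)
Definition injects T U (A : set T) (B : set U) :=
  exists f : T -> U, (forall x, A x -> B (f x)) /\
    (forall x y, A x -> A y -> f x = f y -> x = y).

Lemma injects_subset T (A B : set T) : A `<=` B -> injects A B.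
Proof. by move=> AB; exists id; split => // x /AB. Qed.

Lemma injects_refl T (A : set T) : injects A A.
Proof. exact: injects_subset. Qed.

Lemma injects_trans T U V (A : set T) (B : set U) (C : set V) :
  injects A B -> injects B C -> injects A C.
Proof.
move=> [f [fAB f_inj]] [g [gBC g_inj]]; exists (g \o f); split.
  by move=> x /fAB /gBC.
by move=> x y Ax Ay /g_inj /f_inj; apply => //; apply: fAB.
Qed.

Lemma injects_setX T T' U U' (A : set T) (A' : set T') (B : set U)
    (B' : set U') :
  injects A B -> injects A' B' -> injects (A `*` A') (B `*` B').
Proof.
move=> [f [fAB f_inj]] [g [gAB g_inj]]; exists (fun p => (f p.1, g p.2)).
split=> [p [/fAB ? /gAB ?]//|[x x'] [y y'] [/= Ax Ax'] [/= Ay Ay'] [e e']].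
by rewrite (f_inj x y) // (g_inj x' y').
Qed.

Lemma injects_image T U (f : T -> U) (A : set T) (a0 : T) :
  injects (f @` A) A.
Proof.
have /choice[g gP] : forall y, exists x, (f @` A) y -> A x /\ f x = y.
  move=> y; have [[x Ax fx]|ny] := pselect ((f @` A) y); first by exists x.
  by exists a0.
exists g; split=> [y /gP[]//|y y' /gP[_ e] /gP[_ e'] gyy'].
by rewrite -e -e' gyy'.
Qed.

Lemma injects_card_le T U (A : set T) (B : set U) :
  injects A B -> (A #<= B)%card.
Proof.
elim/Ppointed: U => U in B *.
  move=> [f [fAB _]].
  have -> : A = set0 by apply/seteqP; split => // x /fAB _; exact: (no (f x)).
  exact: card_ge0.
move=> [f [fAB f_inj]]; apply/pcard_leP/injfunPex; exists f => [x /fAB //|].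
by move=> x y /set_mem Ax /set_mem Ay; apply: f_inj.
Qed.

Lemma card_le_injects T U (A : set T) (B : set U) (a0 : T) :
  A a0 -> (A #<= B)%card -> injects A B.
Proof.
move=> Aa0 /card_leP[F].
pose g (x : T) : U := match pselect (A x) with
  | left Ax => val (F (SigSub (mem_set Ax)))
  | right _ => val (F (SigSub (mem_set Aa0))) end.
exists g; split => [x Ax|x y Ax Ay]; rewrite /g.
  by case: pselect => // Ax'; exact: set_mem (valP (F _)).
case: pselect => // Ax'; case: pselect => // Ay' /val_inj /(@inj _ _ _ F).
by move=> /(_ (in_setT _) (in_setT _)) /(congr1 val).
Qed.

Lemma injects_setU T (D P Q : set T) (x0 x1 : T) :
  injects (D `*` D) D -> D x0 -> D x1 -> x0 <> x1 ->
  injects P D -> injects Q D -> injects (P `|` Q) D.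
Proof.
move=> [h [hD h_inj]] Dx0 Dx1 x01 [f [fD f_inj]] [g [gD g_inj]].
pose phi x := if pselect (P x) then h (f x, x0) else h (g x, x1).
have Qz z : (P `|` Q) z -> ~ P z -> Q z by case.
exists phi; split => [x PQx|x y PQx PQy]; rewrite /phi.
  by case: pselect => Px; apply: hD; split => //=; [apply: fD|apply/gD/Qz].
case: pselect => Px; case: pselect => Py /h_inj.
- by case/(_ (conj (fD _ Px) Dx0) (conj (fD _ Py) Dx0)) => /f_inj; apply.
- by case/(_ (conj (fD _ Px) Dx0) (conj (gD _ (Qz _ PQy Py)) Dx1)).
- by case/(_ (conj (gD _ (Qz _ PQx Px)) Dx1) (conj (fD _ Py) Dx0)) => _ /esym.
- case/(_ (conj (gD _ (Qz _ PQx Px)) Dx1) (conj (gD _ (Qz _ PQy Py)) Dx1)).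
  by move=> /g_inj; apply; apply: Qz.
Qed.

Lemma bigcup_chain_common T (F : set (set T)) (p q : T) :
  total_on F subset -> (\bigcup_(G in F) G) p -> (\bigcup_(G in F) G) q ->
  exists2 G, F G & G p /\ G q.
Proof.
move=> Fch [G FG Gp] [G' FG' G'q].
have [GG'|G'G] := Fch _ _ FG FG'.
  by exists G' => //; split => //; apply: GG'.
by exists G => //; split => //; apply: G'G.
Qed.

Lemma Zorn_bigcup_from T (P : set (set T)) (G0 : set T) : P G0 ->
  (forall F, F `<=` P -> F !=set0 -> total_on F subset ->
    P (\bigcup_(G in F) G)) ->
  exists M, [/\ P M, G0 `<=` M & forall N, M `<` N -> ~ P N].
Proof.
move=> PG0 Pchain; pose P' := [set G | G = set0 \/ P G /\ G0 `<=` G].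
have [M [P'M Mmax]] : exists M, P' M /\ forall N, M `<` N -> ~ P' N.
  apply: Zorn_bigcup => F FP' Fch; pose F' := [set G | F G /\ G !=set0].
  have -> : \bigcup_(G in F) G = \bigcup_(G in F') G.
    apply/seteqP; split => p [G FG Gp]; exists G => //; last by case: FG.
    by split; last exists p.
  have [[G [FG [p Gp]]]|F'0] := pselect (F' !=set0); last first.
    by left; apply/seteqP; split => // p [G F'G _]; apply: F'0; exists G.
  have F'P G' : F' G' -> P G' /\ G0 `<=` G' by move=> [/FP'[->|//] [? []]].
  have F'G : F' G by split => //; exists p.
  right; split; last by move=> x G0x; exists G => //; apply: (F'P G F'G).2.
  apply: Pchain => [H /F'P[]//||H H' [FH _] [FH' _]]; last exact: Fch.
  by exists G.
have [PM G0M] : P M /\ G0 `<=` M.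
  case: P'M => // M0; suff G0M : G0 `<=` M.
    by split => //; rewrite M0 -(_ : G0 = set0) // -subset0 -M0.
  move=> x G0x; case: (Mmax G0); last by right; split.
  by rewrite M0; split => // /(_ x G0x).
exists M; split => // N MN PN; apply: (Mmax N MN); right; split => //.
exact: subset_trans G0M (properW MN).
Qed.

Section RelationGraphs.
Variables T U : Type.
Implicit Types (G : set (T * U)) (P : set T) (Q : set U).

Definition functional_rel G := forall x y y', G (x, y) -> G (x, y') -> y = y'.

Definition injective_rel G := forall x x' y, G (x, y) -> G (x', y) -> x = x'.

Definition inj_graph P Q G := [/\ G `<=` P `*` Q,
  forall x, P x -> exists y, G (x, y), functional_rel G & injective_rel G].

Lemma functional_rel_bigcup (F : set (set (T * U))) : total_on F subset ->
  (forall G, F G -> functional_rel G) -> functional_rel (\bigcup_(G in F) G).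
Proof.
move=> Fch Ffun x y y' r r'.
by have [G FG [Gr Gr']] := bigcup_chain_common Fch r r'; apply: Ffun Gr Gr'.
Qed.

Lemma injective_rel_bigcup (F : set (set (T * U))) : total_on F subset ->
  (forall G, F G -> injective_rel G) -> injective_rel (\bigcup_(G in F) G).
Proof.
move=> Fch Finj x x' y r r'.
by have [G FG [Gr Gr']] := bigcup_chain_common Fch r r'; apply: Finj Gr Gr'.
Qed.

Lemma functional_relU G G' : functional_rel G -> functional_rel G' ->
  (forall x y y', G (x, y) -> G' (x, y') -> False) ->
  functional_rel (G `|` G').
Proof.
move=> Gfun G'fun disj x y y' [r|r] [r'|r']; first exact: Gfun r r'.
- by case: (disj _ _ _ r r').
- by case: (disj _ _ _ r' r).
- exact: G'fun r r'.
Qed.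

Lemma injective_relU G G' : injective_rel G -> injective_rel G' ->
  (forall x x' y, G (x, y) -> G' (x', y) -> False) ->
  injective_rel (G `|` G').
Proof.
move=> Ginj G'inj disj x x' y [r|r] [r'|r']; first exact: Ginj r r'.
- by case: (disj _ _ _ r r').
- by case: (disj _ _ _ r' r).
- exact: G'inj r r'.
Qed.

Lemma inj_graphU P P' Q Q' G G' : inj_graph P Q G -> inj_graph P' Q' G' ->
  P `&` P' `<=` set0 -> Q `&` Q' `<=` set0 ->
  inj_graph (P `|` P') (Q `|` Q') (G `|` G').
Proof.
move=> [GPQ Gtot Gfun Ginj] [GPQ' Gtot' Gfun' Ginj'] PP' QQ'; split.
- by move=> p [/GPQ[? ?]|/GPQ'[? ?]]; split; by [left|right].
- by move=> x [/Gtot|/Gtot'] [y r]; exists y; [left|right].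
- apply: functional_relU => // x y y' /GPQ[Px _] /GPQ'[P'x _].
  exact: (PP' x).
- apply: injective_relU => // x x' y /GPQ[_ Qy] /GPQ'[_ Q'y].
  exact: (QQ' y).
Qed.

Lemma inj_graph_fun (f : T -> U) P Q : (forall x, P x -> Q (f x)) ->
  (forall x y, P x -> P y -> f x = f y -> x = y) ->
  inj_graph P Q [set (x, f x) | x in P].
Proof.
move=> fPQ f_inj; split.
- by move=> _ [x Px <-]; split => //; apply: fPQ.
- by move=> x Px; exists (f x), x.
- by move=> x y y' [z _ [-> <-]] [z' _ [-> <-]].
- by move=> x x' y [z Pz [<- <-]] [z' Pz' [<- e]]; apply: f_inj.
Qed.

Lemma inj_graph_injects P Q G (y0 : U) : inj_graph P Q G -> injects P Q.
Proof.
move=> [GPQ Gtot _ Ginj].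
have /choice[f fP] : forall x, exists y, P x -> G (x, y).
  move=> x; have [/Gtot[y r]|nPx] := pselect (P x); first by exists y.
  by exists y0.
exists f; split => [x /fP /GPQ[]//|x x' /fP r /fP r' e].
by rewrite e in r; apply: Ginj r r'.
Qed.

End RelationGraphs.

Lemma injects_total T (x0 : T) (A B : set T) : injects A B \/ injects B A.
Proof.
pose P := [set G : set (T * T) |
  [/\ G `<=` A `*` B, functional_rel G & injective_rel G]].
have [M [[MAB Mfun Minj] Mmax]] : exists M, P M /\ forall N, M `<` N -> ~ P N.
  apply: Zorn_bigcup => F FP Fch; split.
  - by move=> p [G /FP[+ _ _] Gp]; apply.
  - by apply: functional_rel_bigcup => // G /FP[].
  - by apply: injective_rel_bigcup => // G /FP[].
have [Atot|/existsNP[a /not_implyP[Aa aM]]] :=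
  pselect (forall a, A a -> exists b, M (a, b)).
  by left; apply: (inj_graph_injects x0 (G := M)); split.
have [Btot|/existsNP[b /not_implyP[Bb bM]]] :=
  pselect (forall b, B b -> exists a, M (a, b)).
  right; apply: (inj_graph_injects x0 (G := [set p | M (p.2, p.1)])); split.
  - by move=> [y x] /MAB[].
  - exact: Btot.
  - by move=> y x x' r r'; apply: Minj r r'.
  - by move=> y y' x r r'; apply: Mfun r r'.
exfalso; apply: (Mmax (M `|` [set (a, b)])).
  split; first by move=> p Mp; left.
  by move=> /(_ (a, b) (or_intror erefl)) Mab; apply: aM; exists b.
split.
- by move=> p [/MAB|->].
- apply: functional_relU => // [x y y' [_ ->] [_ ->]//|x y y' Mxy [ea _]].
  by apply: aM; exists y; rewrite -ea.
- apply: injective_relU => // [x x' y [-> _] [-> _]//|x x' y Mxy [_ eb]].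
  by apply: bM; exists x; rewrite -eb.
Qed.

Section InjectsSetXSelf.
Variables (T : Type) (A : set T).
Hypothesis nat_A : injects [set: nat] A.

Let k := sval (cid nat_A).
Let kA n : A (k n). Proof. exact: (svalP (cid nat_A)).1. Qed.
Let k_inj : injective k.
Proof. by move=> m n; apply: (svalP (cid nat_A)).2. Qed.

Let sqdom (G : set ((T * T) * T)) := [set x | exists z, G ((x, x), z)].

(* The domain D of the injection D * D -> D is read off the graph as
   [sqdom G], so that unions of chains of such graphs stay of this form. *)
Let square_graph G :=
  sqdom G `<=` A /\ inj_graph (sqdom G `*` sqdom G) (sqdom G) G.

(* Graphs above the seed have a domain containing the infinite set [range k],
   which rules out the small maximal graphs. *)
Let seed := [set ((k mn.1, k mn.2), k (pickle mn)) | mn in [set: nat * nat]].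

Let sqdomS G G' : G `<=` G' -> sqdom G `<=` sqdom G'.
Proof. by move=> GG' x [z Gz]; exists z; apply: GG'. Qed.

Let sqdom_inj_graph D D' G : inj_graph (D `*` D) D' G -> sqdom G = D.
Proof.
move=> [GD Gtot _ _]; apply/seteqP; split => [x [z /GD[[]]]//|x Dx].
by have [z Gz] := Gtot (x, x) (conj Dx Dx); exists z.
Qed.

Let square_graph_seed : square_graph seed.
Proof.
have seed_graph : inj_graph (range k `*` range k) (range k) seed.
  split.
  - by move=> _ [mn _ <-]; do !split; eexists.
  - move=> [x y] [/= [m _ <-] [n _ <-]].
    by exists (k (pickle (m, n))), (m, n).
  - move=> [x y] z z' [[m n] _ [<- <- <-]].
    by move=> [[m' n'] _ [/k_inj-> /k_inj-> <-]].
  - move=> [x y] [x' y'] z [[m n] _ [<- <- <-]] [[m' n'] _ [<- <-]].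
    by move=> /k_inj /(pcan_inj pickleK) [-> ->].
rewrite /square_graph (sqdom_inj_graph seed_graph).
by split => // _ [n _ <-].
Qed.

Let square_graph_bigcup F : F `<=` square_graph -> F !=set0 ->
  total_on F subset -> square_graph (\bigcup_(G in F) G).
Proof.
move=> Fsq _ Fch; set U := \bigcup_(G in F) G.
have sqdomU x : sqdom U x -> exists2 G, F G & sqdom G x.
  by move=> [z [G FG Gz]]; exists G => //; exists z.
have GU G : F G -> G `<=` U by move=> FG p Gp; exists G.
split => [x /sqdomU[G /Fsq[GA _] /GA]//|].
split.
- move=> [[x y] z] [G FG Gp]; have [_ [GD _ _ _]] := Fsq G FG.
  have [[/= Gx Gy] Gz] := GD _ Gp.
  by do !split; apply: sqdomS (GU G FG) _ _.
- move=> [x y] [/sqdomU[G FG Gx] /sqdomU[G' FG' G'y]].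
  have [GG'|G'G] := Fch _ _ FG FG'.
    have [_ [_ G'tot _ _]] := Fsq G' FG'.
    have [|z r] := G'tot (x, y); last by exists z, G'.
    by split => //; apply: sqdomS GG' _ Gx.
  have [_ [_ Gtot _ _]] := Fsq G FG.
  have [|z r] := Gtot (x, y); last by exists z, G.
  by split => //; apply: sqdomS G'G _ G'y.
- by apply: functional_rel_bigcup => // G /Fsq[_ []].
- by apply: injective_rel_bigcup => // G /Fsq[_ []].
Qed.

Let seed_sqdom M : seed `<=` M -> forall n, sqdom M (k n).
Proof.
by move=> seedM n; apply: sqdomS seedM _ _; exists (k (pickle (n, n))), (n, n).
Qed.

Let square_graph_extend M : square_graph M -> seed `<=` M ->
  injects (sqdom M) (A `\` sqdom M) -> exists N, M `<` N /\ square_graph N.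
Proof.
set D := sqdom M => -[DA Mgraph] /seed_sqdom kD [g [gD g_inj]].
have DDD : injects (D `*` D) D := inj_graph_injects (k 0) Mgraph.
set E := g @` D.
have EAD : E `<=` A `\` D by move=> _ [x Dx <-]; apply: gD.
(* [D `|` E] injects into [D], hence its square into [D] and then into [E]:
   the pairs outside [D `*` D] get fresh values in [E]. *)
have [e [eE e_inj]] : injects ((D `|` E) `*` (D `|` E)) E.
  have DED : injects (D `|` E) D.
    apply: injects_setU DDD (kD 0) (kD 1) _ (injects_refl D) _.
      by move/k_inj.
    exact: injects_image g D (k 0).
  apply: injects_trans (injects_setX DED DED) (injects_trans DDD _).
  by exists g; split => // x Dx; exists x.
pose N := M `|` [set (p, e p) | p in (D `|` E) `*` (D `|` E) `\` D `*` D].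
have Ngraph : inj_graph ((D `|` E) `*` (D `|` E)) (D `|` E) N.
  have DDDE : D `*` D `<=` (D `|` E) `*` (D `|` E).
    by move=> p [? ?]; split; left.
  rewrite -(setDUK DDDE); apply: inj_graphU Mgraph (inj_graph_fun _ _) _ _.
  - by move=> p [? _]; apply: eE.
  - by move=> p q [? _] [? _]; apply: e_inj.
  - by move=> p [? []].
  - by move=> x [Dx /EAD[_ ]].
exists N; split; last first.
  rewrite /square_graph (sqdom_inj_graph Ngraph).
  by split => // x [/DA|/EAD[]].
split; first by move=> p Mp; left.
pose x := g (k 0); have Ex : E x := imageP g (kD 0).
have Dx : ~ D x by have [] := EAD x Ex.
have Nx : N ((x, x), e (x, x)).
  by right; exists (x, x) => //; split; [split; right|case].
move=> /(_ _ Nx) Mx; have [MD _ _ _] := Mgraph.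
by have [[/Dx]] := MD _ Mx.
Qed.

Lemma injects_setX_self : injects (A `*` A) A.
Proof.
have [M [[MA Mgraph] seedM Mmax]] :=
  Zorn_bigcup_from square_graph_seed square_graph_bigcup.
set D := sqdom M in MA Mgraph Mmax; have kD := seed_sqdom seedM.
have DDD : injects (D `*` D) D := inj_graph_injects (k 0) Mgraph.
have [ADD|DAD] := injects_total (k 0) (A `\` D) D; last first.
  have [N [MN Nsq]] := square_graph_extend (conj MA Mgraph) seedM DAD.
  by case: (Mmax N MN).
have AD : injects A D.
  have ADAD : A `<=` D `|` (A `\` D).
    by move=> x Ax; have [|] := pselect (D x); [left|right].
  apply: injects_trans (injects_subset ADAD) _.
  by apply: injects_setU DDD (kD 0) (kD 1) _ (injects_refl D) ADD => /k_inj.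
apply: injects_trans (injects_setX AD AD) (injects_trans DDD _).
exact: injects_subset.
Qed.

End InjectsSetXSelf.

Definition seq_over (T : eqType) (A : set T) : set (seq T) :=
  [set s : seq T | forall x : T, x \in s -> A x].

Lemma seq_over_cons (T : eqType) (A : set T) x s :
  seq_over A (x :: s) <-> A x /\ seq_over A s.
Proof.
split => [As|[Ax As] y]; last by rewrite inE => /predU1P[->|/As].
by split => [|y ys]; apply: As; rewrite inE ?eqxx ?ys ?orbT.
Qed.

Lemma injects_seq_map (T U : eqType) (A : set T) (B : set U) :
  injects A B -> injects (seq_over A) (seq_over B).
Proof.
move=> [f [fAB f_inj]]; exists (map f); split.
  by move=> s As _ /mapP[x /As Ax ->]; apply: fAB.
elim=> [|x s IHs] [|y t] //= /seq_over_cons[Ax As] /seq_over_cons[Ay At] [].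
by move=> /f_inj -> // /IHs ->.
Qed.

Lemma injects_seq_over (T : eqType) (A : set T) :
  injects [set: nat] A -> injects (seq_over A) A.
Proof.
move=> nat_A; have AAA := injects_setX_self nat_A; have [k [kA _]] := nat_A.
pose sized n := [set s | seq_over A s /\ size s = n].
have /choice[F F_inj] : forall n, injects (sized n) A.
  elim=> [|n IHn].
    exists (fun=> k 0); split => [s _|s t [_ /size0nil ->] [_ /size0nil ->]] //.
    exact: kA.
  apply: injects_trans (injects_trans (injects_setX (injects_refl A) IHn) AAA).
  exists (fun s => (head (k 0) s, behead s)); split.
    by case=> [|x s] [] // /seq_over_cons[Ax As] [sz].
  by case=> [|x s] [|y t] [_ sz] [_ sz'] //= [-> ->].
apply: injects_trans (injects_trans (injects_setX nat_A (injects_refl A)) AAA).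
exists (fun s => (size s, F (size s) s)); split => [s As|s t As At [st]].
  by split => //; apply: (F_inj _).1.
by rewrite -st => /(F_inj (size s)).2; apply.
Qed.

Local Open Scope ring_scope.

Lemma dense_nbhs (T : topologicalType) (S : set T) (x : T) (W : set T) :
  dense S -> nbhs x W -> exists2 y, S y & W y.
Proof.
move=> Sd /nbhs_interior xW.
have [|y [/interior_subset Wy Sy]] := Sd W° _ (@open_interior _ W).
  by exists x; apply: nbhs_singleton.
by exists y.
Qed.

Section TopologicalLmodule.
Variables (K : numFieldType) (X : topologicalLmodType K).

Lemma add_continuousl (a : X) : continuous (fun x => a + x).
Proof.
move=> x.
exact: (continuous2_cvg _ (add_continuous (a, x)) (cvg_cst a) cvg_id).
Qed.

Lemma sub_continuousl (a : X) : continuous (fun x => a - x).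
Proof.
move=> x; exact: (continuous2_cvg (h := fun u v : X => u - v) _
  (@sub_continuous _ (a, x)) (cvg_cst a) cvg_id).
Qed.

Lemma sub_continuousr (a : X) : continuous (fun x => x - a).
Proof.
move=> x; exact: (continuous2_cvg (h := fun u v : X => u - v) _
  (@sub_continuous _ (x, a)) cvg_id (cvg_cst a)).
Qed.

Lemma scale_continuousl (v : X) : continuous (fun k : K^o => k *: v).
Proof.
move=> k; exact: (continuous2_cvg (h := fun (c : K^o) (u : X) => c *: u)
  (nbhs_filter k) (scale_continuous (k, v)) cvg_id (cvg_cst v)).
Qed.

Definition lincomb (l : seq (K * X)) : X := \sum_(p <- l) p.1 *: p.2.

Lemma lincomb_approx (S : set K^o) (H : set X) (l : seq (K * X)) :
  dense S -> seq_over ([set: K] `*` H) l -> forall W, nbhs (lincomb l) W ->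
  exists2 l', seq_over (S `*` H) l' & W (lincomb l').
Proof.
move=> Sd; elim: l => [_ W|[c v] l IHl /seq_over_cons[[_ Hv] Hl] W].
  rewrite /lincomb big_nil => /nbhs_singleton W0.
  by exists [::] => //; rewrite /lincomb big_nil.
rewrite /lincomb big_cons => /(add_continuous (c *: v, lincomb l)).
move=> [[W1 W2] /= [W1cv W2l] W12].
have [l' Hl' W2l'] := IHl Hl _ W2l.
have [q Sq W1qv] := dense_nbhs Sd (scale_continuousl W1cv).
exists ((q, v) :: l'); first by apply/seq_over_cons.
by rewrite /lincomb big_cons; apply: (W12 (_, _)).
Qed.

Lemma lincomb_dense (S : set K^o) (H : set X) : dense S -> spans H ->
  forall (x : X) (W : set X), nbhs x W ->
  exists2 l, seq_over (S `*` H) l & W (lincomb l).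
Proof.
move=> Sd Hspan x W; have [s [c [sH ->]]] := Hspan x.
rewrite -(big_map (fun v => (c v, v)) xpredT (fun p => p.1 *: p.2)).
apply: (lincomb_approx Sd).
by move=> _ /mapP[v vs ->]; split => //; apply: sH.
Qed.

Lemma nbhs0_sub (x : X) (W : set X) : nbhs x W ->
  exists2 V : set X, nbhs 0 V & forall y z, V y -> V z -> W (x + (y - z)).
Proof.
move=> xW; have W0 : nbhs ((0 : X) - 0) [set y | W (x + y)].
  by rewrite subrr; have := @add_continuousl x 0 W; rewrite addr0 => /(_ xW).
have [[V1 V2] /= [V1_0 V2_0] V12] := @sub_continuous _ (0, 0) _ W0.
exists (V1 `&` V2); first exact: filterI.
by move=> y z [V1y _] [_ V2z]; apply: (V12 (y, z)).
Qed.

Definition translate_interior (p : seq (K * X) * set X) : set X :=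
  [set y | p.2° (y - lincomb p.1)].

Lemma translate_interior_basis (S : set K^o) (H : set X) (B0 : set (set X)) :
  dense S -> spans H -> (forall U, B0 U -> nbhs 0 U) ->
  (forall V, nbhs 0 V -> exists2 U, B0 U & U `<=` V) ->
  basis (translate_interior @` (seq_over (S `*` H) `*` B0)).
Proof.
move=> Sd Hspan B0nbhs B0base; split.
  move=> _ [[l U] _ <-]; apply: open_comp (@open_interior _ U).
  by move=> y _; apply: sub_continuousr.
move=> x W /= xW; have [V V0 VW] := nbhs0_sub xW.
have [U B0U UV] := B0base V V0.
have [l Sl Ul] : exists2 l, seq_over (S `*` H) l & U° (x - lincomb l).
  apply: (lincomb_dense (x := x) (W := [set z | U° (x - z)]) Sd Hspan).
  apply: (@sub_continuousl x x).
  by rewrite subrr; apply: nbhs_interior; apply: B0nbhs.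
exists (translate_interior (l, U)); first by split; [exists (l, U)|].
move=> y /= /interior_subset /UV Vy.
have := VW _ _ Vy (UV _ (interior_subset Ul)).
by rewrite opprB subrKA addrC subrK.
Qed.

Theorem weight_le_spanning (S : set K^o) (H : set X) :
  dense S -> countable S -> first_countable X -> spans H -> infinite_set H ->
  exists B : set (set X), basis B /\ (B #<= H)%card.
Proof.
move=> Sd Sc Xfc Hspan Hinf; have [B0 [B0c B0nbhs B0base]] := Xfc 0.
exists (translate_interior @` (seq_over (S `*` H) `*` B0)); split.
  exact: translate_interior_basis.
have nat_H : injects [set: nat] H.
  by apply: (card_le_injects (a0 := 0%N)) => //; apply/infiniteP.
have HHH := injects_setX_self nat_H.
have [U0 B0U0 _] := B0base setT filterT.
have [q0 [_ Sq0]] := Sd setT (ex_intro _ 0 I) openT.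
have S_H : injects S H := injects_trans (card_le_injects Sq0 Sc) nat_H.
have B0_H : injects B0 H := injects_trans (card_le_injects B0U0 B0c) nat_H.
have SH_H : injects (S `*` H) H.
  exact: injects_trans (injects_setX S_H (injects_refl H)) HHH.
apply/injects_card_le/(injects_trans (injects_image _ _ ([::], U0))).
apply: injects_trans (injects_setX _ B0_H) HHH.
exact: injects_trans (injects_seq_map SH_H) (injects_seq_over nat_H).
Qed.

End TopologicalLmodule.

Lemma weight_le_hamel_dim (K : numFieldType) (S : set K^o) :
  dense S -> countable S ->
  forall X : topologicalLmodType K, first_countable X ->
  infinite_dimensional X -> forall H : set X, hamel_basis H ->
  exists B : set (set X), basis B /\ (B #<= H)%card.
Proof.
move=> Sd Sc X Xfc Xinf H [_ Hspan].
have Hinf : infinite_set H by move=> Hfin; apply: Xinf; exists H.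
exact: weight_le_spanning Sd Sc Xfc Hspan Hinf.
Qed.

Lemma dense_complex_rat (R : realType) :
  dense ([set Complex (ratr a.1) (ratr a.2) | a in [set: rat * rat]]
    : set R[i]^o).
Proof.
move=> O [[a b] Oab]; rewrite openE => /(_ _ Oab) /nbhs_ballP[[r c] /= r0 rO].
rewrite -ball_normE /ball_ /= in rO.
move: r0; rewrite ltcE /= => /andP[/eqP c0 r0]; subst c.
have [|p] := @rat_in_itvoo R (a - r / 2) (a + r / 2); first by lra.
rewrite in_itv /= => /andP[p1 p2].
have [|q] := @rat_in_itvoo R (b - r / 2) (b + r / 2); first by lra.
rewrite in_itv /= => /andP[q1 q2].
exists (Complex (ratr p) (ratr q)); split; last by exists (p, q).
apply: rO => /=; rewrite normc_def /= ltcR -(@ger0_norm _ r) ?ltW //.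
rewrite -sqrtr_sqr ltr_sqrt ?exprn_gt0 //.
set u := a - ratr p; set v := b - ratr q.
have [u1 u2] : - (r / 2) < u /\ u < r / 2 by rewrite /u; split; lra.
have [v1 v2] : - (r / 2) < v /\ v < r / 2 by rewrite /v; split; lra.
rewrite !expr2; nra.
Qed.

Theorem theorem3p6 (R : realType) :
  (forall X : topologicalLmodType R,
     first_countable X -> infinite_dimensional X ->
     forall H : set X, hamel_basis H ->
       exists B : set (set X), basis B /\ (B #<= H)%card) /\
  (forall X : topologicalLmodType R[i],
     first_countable X -> infinite_dimensional X ->
     forall H : set X, hamel_basis H ->
       exists B : set (set X), basis B /\ (B #<= H)%card).
Proof.
split; apply: weight_le_hamel_dim.
- exact: dense_rat.
- exact: card_le_trans (card_image_le _ _) (countableP _).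
- exact: dense_complex_rat.
- exact: card_le_trans (card_image_le _ _) (countableP _).
Qed.
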